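(* For each integer $d\ge0$, let $T_d(t)=\sum_{i=0}^dT(d,i)t^i$ be the unique polynomial of degree $d$ satisfying $T(d,i)=T(d,d-i)$, such that for $0\le i\le d/2$, $T(d,i)$ is the coefficient of $t^i$ in $\sum_{j=0}^d\binom{d+1}{j}2^jt^j(1-t)^{d-j}$. Set $T(d,i)=0$ for $i<0$. Then for $0\le i<d/2$, $$T(d,i)=T(d-1,i)+T(d-1,i-1),$$ and for $d=2k$ with $k\ge1$, $$T(2k,k)=2T(2k-1,k-1)+\binom{2k}{k}.$$ Consequently $T(d,i)=\sum_{j=0}^i\binom{d+1}{j}$ for $0\le i\le d/2$. *)

From HB Require Import structures.
From mathcomp Require Import all_boot all_order all_algebra.
Set Implicit Arguments. Unset Strict Implicit. Unset Printing Implicit Defensive.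
Import Order.TTheory GRing.Theory Num.Theory.
Local Open Scope ring_scope.

Definition Tpoly (d : nat) : {poly int} :=
  \sum_(j < d.+1) (('C(d.+1, j) * 2 ^ j)%N%:R : int) *: ('X^j * (1 - 'X) ^+ (d - j)).

(* T(d,i) for natural i: coefficient of t^i of P_d for i <= d/2,
   T(d,d-i) for d/2 < i <= d (symmetry), and 0 for i > d (degree d). *)
Definition Tn (d i : nat) : int :=
  if (2 * i <= d)%N then (Tpoly d)`_i
  else if (i <= d)%N then (Tpoly d)`_(d - i)
  else 0.

Definition T (d : nat) (i : int) : int :=
  match i with
  | Posz n => Tn d n
  | Negz _ => 0
  end.

(* Writing [1 + t = (1 - t) + 2t] and expanding by the binomial theorem gives
   [(1 - t) P_d(t) = (1 + t)^(d+1) - (2t)^(d+1)].  Up to degree d the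
   coefficients of the left side are the first differences of those of P_d,
   so [T(d,i)] is the partial binomial sum [\sum_(j <= i) C(d+1,j)], and both
   recurrences are Pascal's rule for these partial sums. *)
From HB Require Import structures.
From mathcomp Require Import all_boot all_order all_algebra.
Import Order.TTheory GRing.Theory Num.Theory.
Local Open Scope ring_scope.

Lemma coef_1DX_exp (R : comNzRingType) (n k : nat) :
  (k <= n)%N -> ((1 + 'X : {poly R}) ^+ n)`_k = 'C(n, k)%:R.
Proof.
move=> le_kn; rewrite exprDn coef_sum (bigD1 (Ordinal (le_kn : (k < n.+1)%N))) //=.
rewrite big1 ?addr0 => [|i neq_ik]; rewrite coefMn expr1n mul1r coefXn.
  by rewrite eqxx.
by case: eqP => [eq_ik|_]; [case/eqP: neq_ik; apply: val_inj | rewrite mul0rn].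
Qed.

Lemma mul1BX_Tpoly (d : nat) :
  (1 - 'X) * Tpoly d = (1 + 'X) ^+ d.+1 - (2%:R *: 'X) ^+ d.+1.
Proof.
have -> : (1 + 'X : {poly int}) = (1 - 'X) + 2%:R *: 'X.
  by rewrite scaler_nat mulr2n addrA subrK.
rewrite exprDn big_ord_recr /= subnn expr0 mul1r binn mulr1n addrK.
rewrite /Tpoly mulr_sumr; apply: eq_bigr => j _.
rewrite -scalerAr exprZn -scalerAr scalerMnl mulnC natrM natrX mulr_natr.
by rewrite mulrCA -exprS mulrC subSn // -ltnS.
Qed.

Definition bin_psum (n i : nat) : nat := \sum_(j < i.+1) 'C(n, j).

Lemma bin_psumSr (n i : nat) : bin_psum n i.+1 = (bin_psum n i + 'C(n, i.+1))%N.
Proof. by rewrite /bin_psum big_ord_recr. Qed.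

Lemma coef_Tpoly (d i : nat) :
  (i <= d)%N -> (Tpoly d)`_i = (bin_psum d.+1 i)%:R.
Proof.
have diff_coef k : (k <= d)%N ->
    (Tpoly d)`_k - (if k == 0%N then 0 else (Tpoly d)`_k.-1) = 'C(d.+1, k)%:R.
  move=> le_kd; have := congr1 (coefp k) (mul1BX_Tpoly d).
  rewrite /= mulrBl mul1r coefB coefXM => ->.
  rewrite coefB coef_1DX_exp 1?leqW // exprZn coefZ coefXn ltn_eqF ?ltnS //.
  by rewrite mulr0 subr0.
elim: i => [|i IHi] le_id.
  by rewrite /bin_psum big_ord1 -(diff_coef 0%N) // subr0.
by rewrite bin_psumSr natrD -IHi 1?ltnW // -(diff_coef i.+1) // addrC subrK.
Qed.

Lemma bin_psumS (n i : nat) :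
  bin_psum n.+1 i.+1 = (bin_psum n i.+1 + bin_psum n i)%N.
Proof.
rewrite /bin_psum big_ord_recl [in RHS]big_ord_recl -addnA !bin0 -big_split.
by congr (1 + _)%N; apply: eq_bigr => j _; rewrite lift0 binS.
Qed.

Lemma bin_psumS_diag (n i : nat) :
  bin_psum n.+1 i.+1 = (2 * bin_psum n i + 'C(n, i.+1))%N.
Proof. by rewrite bin_psumS bin_psumSr addnAC addnn mul2n. Qed.

Lemma T_bin_psum (d i : nat) : (2 * i <= d)%N -> T d i = (bin_psum d.+1 i)%:R.
Proof.
move=> le_2i_d; rewrite /T /Tn le_2i_d coef_Tpoly //.
by apply: leq_trans le_2i_d; rewrite mul2n -addnn leq_addr.
Qed.

Lemma T_pascal (d i : nat) : (2 * i < d)%N -> T d i = T d.-1 i + T d.-1 (i%:Z - 1).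
Proof.
case: d => [|d] //; rewrite ltnS; case: i => [|i] le_2i_d.
  by rewrite !T_bin_psum // /bin_psum !big_ord1 !bin0 /= addr0.
have le_2i_d' := leq_trans (leq_mul (leqnn 2) (leqnSn i)) le_2i_d.
by rewrite -predn_int // !T_bin_psum ?leqW //= bin_psumS natrD.
Qed.

Lemma T_central (k : nat) : (0 < k)%N ->
  T (2 * k)%N k = 2 * T (2 * k)%N.-1 (k%:Z - 1) + 'C(2 * k, k)%:R.
Proof.
case: k => [|k] // _; rewrite mulnS -predn_int // !T_bin_psum ?mulnS //=.
by rewrite bin_psumS_diag natrD natrM.
Qed.

Theorem lemma11p2 :
  (forall d i : nat, (2 * i < d)%N ->
     T d (Posz i) = T d.-1 (Posz i) + T d.-1 (Posz i - 1)) /\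
  (forall k : nat, (1 <= k)%N ->
     T (2 * k) (Posz k) = 2 * T (2 * k).-1 (Posz k - 1) + ('C(2 * k, k))%:R) /\
  (forall d i : nat, (2 * i <= d)%N ->
     T d (Posz i) = \sum_(j < i.+1) ('C(d.+1, j))%:R).
Proof.
split; [exact: T_pascal | split; [exact: T_central |]].
by move=> d i le_2i_d; rewrite T_bin_psum // natr_sum.
Qed.
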